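(* Fix any constant $0<\varepsilon<1/4$, and let $\delta(n)\le 1/(50n^2)$ for every positive integer $n$. Then for every positive integer $n$ and every finite totally ordered set $X$: if there exists an $(\varepsilon,\delta(n))$-differentially private algorithm $A:X^n\to X$ that solves the interior point problem on $X$ with probability at least $3/4$ (i.e. for every $D\in X^n$, $\Pr[\min D\le A(D)\le \max D]\ge 3/4$), then $n\ge \Omega(\log^*|X|)$, where the constant implied by $\Omega(\cdot)$ does not depend on $n$ or $X$.
   Context: A randomized algorithm $M:X^n\to Y$ is $(\varepsilon,\delta)$-differentially private if for every two databases $D,D'\in X^n$ differing in exactly one row and every set $T\subseteq Y$, $\Pr[M(D)\in T]\le e^{\varepsilon}\Pr[M(D')\in T]+\delta$. For a totally ordered set $X$, an algorithm $A:X^n\to X$ solves the interior point problem with error probability $\beta$ if for every database $D\in X^n$, $\Pr[\min D\le A(D)\le\max D]\ge 1-\beta$ over the coins of $A$; its sample complexity is $n$. $\log^*$ denotes the iterated base-2 logarithm. *)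

From HB Require Import structures.
From mathcomp Require Import all_boot all_order all_algebra.
From mathcomp Require Import all_classical all_reals.
From mathcomp Require Import sequences exp.
Set Implicit Arguments. Unset Strict Implicit. Unset Printing Implicit Defensive.
Import Order.TTheory GRing.Theory Num.Theory.
Local Open Scope ring_scope.

Fixpoint logstar_fuel (R : realType) (k : nat) (x : R) : nat :=
  match k with
  | 0 => 0%N
  | k'.+1 => if x <= 1 then 0%N else (logstar_fuel k' (ln x / ln 2)).+1
  end.

(* log* m for a natural number m; fuel m is always sufficient since log* m <= m. *)
Definition logstar (R : realType) (m : nat) : nat := logstar_fuel m (m%:R : R).

Section DP.
Context (R : realType) (d : Order.disp_t) (X : finOrderType d) (n : nat).

Definition is_rand_alg (A : n.-tuple X -> {ffun X -> R}) : Prop :=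
  forall D, (forall x, 0 <= A D x) /\ \sum_(x : X) A D x = 1.

Definition neighbors (D D' : n.-tuple X) : bool :=
  #|[set i : 'I_n | tnth D i != tnth D' i]| == 1%N.

Definition diff_private (eps delta : R) (A : n.-tuple X -> {ffun X -> R}) : Prop :=
  forall D D' : n.-tuple X, neighbors D D' ->
  forall T : {set X},
    \sum_(x in T) A D x <= expR eps * \sum_(x in T) A D' x + delta.

Definition tmin (D : n.-tuple X) (y : X) : X := foldr Order.min (head y D) D.
Definition tmax (D : n.-tuple X) (y : X) : X := foldr Order.max (head y D) D.

(* y is an interior point of D: min D <= y <= max D (for n >= 1 the default
   value y of head is never used). *)
Definition interior (D : n.-tuple X) (y : X) : bool :=
  (tmin D y <= y)%O && (y <= tmax D y)%O.

Definition solves_interior (p : R) (A : n.-tuple X -> {ffun X -> R}) : Prop :=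
  forall D : n.-tuple X, p <= \sum_(x | interior D x) A D x.

End DP.

From HB Require Import structures.
From mathcomp Require Import all_boot all_order all_algebra.
From mathcomp Require Import all_classical all_reals.
From mathcomp Require Import sequences exp.
From mathcomp Require Import zify ring lra.
Import Order.TTheory GRing.Theory Num.Theory.

(* If |X| exceeds a tower of height O(n), Ramsey's theorem for ordered
   (n+1)-uniform hypergraphs, applied to the colouring of an increasing
   sequence t_0 < ... < t_n by the discretised values
   Pr[A(t without t_j) <= t_j] (j <= n), yields a long increasing sequence h on
   which these values depend, up to 1/(32n), only on j.  For the database
   D = (h_{4k+4})_{k<n} the interior point guarantee forces
   Pr[A(D) <= h_{4i+1}] to grow by 1/(2n) at some i.  Moving row i of D from
   h_{4i+4} to h_{4i+6} gives a neighbour D' which, by homogeneity, puts this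
   whole increment on (h_{4i+5}, h_{4i+7}], while D puts less than 1/(32n)
   there: this contradicts (eps, delta)-differential privacy. *)

Set Implicit Arguments.
Unset Strict Implicit.
Unset Printing Implicit Defensive.

Section OrderedRamsey.
Variables (T : eqType) (C : finType).

Fixpoint subseqs (s : seq T) : seq (seq T) :=
  if s is x :: s' then subseqs s' ++ map (cons x) (subseqs s') else [:: [::]].

Lemma size_subseqs s : size (subseqs s) = 2 ^ size s.
Proof. by elim: s => //= x s IH; rewrite size_cat size_map IH expnS mul2n addnn. Qed.

Lemma mem_subseqs u s : subseq u s -> u \in subseqs s.
Proof.
elim: s u => [|x s IH] [|y u] //=; rewrite mem_cat.
- by move=> _; rewrite IH ?sub0seq.
- case: eqP => [-> /IH|_ /IH ->] //.
  by rewrite (mem_map (fun a b (E : x :: a = x :: b) => congr1 behead E)) orbC => ->.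
Qed.

Lemma size_sum_count (f : T -> C) (c : seq T) :
  size c = \sum_(i : C) count (fun x => f x == i) c.
Proof.
elim: c => [|y c IH] /=; first by rewrite big1.
rewrite big_split /= -IH (bigD1 (f y)) //= eqxx big1 // => i /negbTE.
by rewrite eq_sym => ->.
Qed.

Lemma rcons_subseqP (u : seq T) x l : subseq (rcons u x) l ->
  exists e1 e2, l = e1 ++ x :: e2 /\ subseq u e1.
Proof.
elim: l u => [|z l IH] u; first by case: u.
case: u => [|a u] /=.
  case: eqP => [<-|_] H; first by exists [::], l.
  have [e1 [e2 [-> _]]] := IH [::] H.
  by exists (z :: e1), e2; rewrite sub0seq.
case: eqP => [<-|_] H.
  have [e1 [e2 [-> Hu]]] := IH u H.
  by exists (a :: e1), e2; rewrite /= eqxx.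
have [e1 [e2 [-> Hu]]] := IH (a :: u) H.
by exists (z :: e1), e2; split; last exact: subseq_trans Hu (subseq_cons e1 z).
Qed.

Section Greedy.
Variable col : seq T -> C.

Definition majority (u c : seq T) : seq T :=
  if c is y :: _ then
    let f x := col (rcons u x) in
    [seq x <- c | f x == arg_max (f y) xpredT (fun i => count (fun z => f z == i) c)]
  else [::].

Lemma majority_subseq u c : subseq (majority u c) c.
Proof. by case: c => // y c; apply: filter_subseq. Qed.

Lemma majority_const u c x y : x \in majority u c -> y \in majority u c ->
  col (rcons u x) = col (rcons u y).
Proof. by case: c => // z c; rewrite !mem_filter => /andP[/eqP-> _] /andP[/eqP-> _]. Qed.

Lemma size_majority u c : size c <= #|C| * size (majority u c).
Proof.
case: c => [|y c] //; rewrite /majority; case: arg_maxnP => // i _ Hi.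
rewrite size_filter (size_sum_count (fun x => col (rcons u x))).
have -> : #|C| * count (fun x => col (rcons u x) == i) (y :: c) =
  \sum_(j : C) count (fun x => col (rcons u x) == i) (y :: c) by rewrite sum_nat_const.
by apply: leq_sum => j _; apply: Hi.
Qed.

Definition majorities (U : seq (seq T)) (c : seq T) := foldr majority c U.

Lemma majorities_subseq U c : subseq (majorities U c) c.
Proof. by elim: U => //= u U IH; apply: subseq_trans (majority_subseq _ _) IH. Qed.

Lemma majorities_const U c u x y : u \in U ->
  x \in majorities U c -> y \in majorities U c -> col (rcons u x) = col (rcons u y).
Proof.
elim: U => //= v U IH; rewrite inE => /orP[/eqP->|uU] Hx Hy.
  exact: majority_const Hx Hy.
by apply: IH uU _ _; apply: (mem_subseq (majority_subseq v _)).
Qed.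

Lemma size_majorities U c : size c <= #|C| ^ size U * size (majorities U c).
Proof.
elim: U => [|u U IH] /=; first by rewrite mul1n.
apply: leq_trans IH _.
by rewrite expnS [#|C| * _]mulnC -mulnA leq_mul2l size_majority orbT.
Qed.

(* Each new element x survives all refinements indexed by subsequences u of the
   prefix p chosen so far, so the colour of rcons u x no longer depends on x. *)
Fixpoint greedy (f : nat) (p c : seq T) : seq T :=
  if f is f'.+1 then
    if majorities (subseqs p) c is x :: c' then x :: greedy f' (rcons p x) c'
    else [::]
  else [::].

Lemma greedy_subseq f p c : subseq (greedy f p c) c.
Proof.
elim: f p c => [|f IH] p c /=; first exact: sub0seq.
have := majorities_subseq (subseqs p) c.
case: (majorities _ _) => [|y c'] Hs; first exact: sub0seq.
by apply: subseq_trans Hs; rewrite /= eqxx.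
Qed.

Definition end_homogeneous (p e : seq T) := forall u e1 x e2 y e3,
  e = e1 ++ x :: e2 ++ y :: e3 -> subseq u (p ++ e1) ->
  col (rcons u x) = col (rcons u y).

Lemma greedy_end_homogeneous f p c : end_homogeneous p (greedy f p c).
Proof.
elim: f p c => [|f IH] p c u e1 x e2 y e3 /=; first by case: e1.
have Hc := @majorities_const (subseqs p) c.
case: (majorities _ _) Hc => [|z c'] Hc; first by case: e1.
case: e1 => [|a e1] /= [<-] Ee Hu.
  rewrite cats0 in Hu; apply: Hc (mem_subseqs Hu) (mem_head _ _) _.
  rewrite inE (mem_subseq (greedy_subseq f (rcons p z) c')) ?orbT // Ee.
  by rewrite mem_cat inE eqxx orbT.
by apply: IH Ee _; rewrite cat_rcons.
Qed.

Lemma size_greedy b f p c : #|C| <= 2 ^ b ->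
  2 ^ (b.+1 * 2 ^ (size p + 2 * f)) <= size c -> size (greedy f p c) = f.
Proof.
move=> HC; elim: f p c => //= f IH p c Hc.
have Hs := size_majorities (subseqs p) c; rewrite size_subseqs in Hs.
case E: (majorities (subseqs p) c) Hs => [|y c'] Hs.
  by move: (leq_trans Hc Hs); rewrite muln0 leqn0 expn_eq0.
congr S; apply: IH; rewrite size_rcons.
set g := b.+1 * 2 ^ (size p + 2 * f).+1.
have Hg : g.*2 = b.+1 * 2 ^ (size p + 2 * f.+1).
  rewrite /g -muln2 -mulnA -expnSr; congr (_ * 2 ^ _); lia.
rewrite -Hg -addnn expnD in Hc.
have HQ : #|C| ^ 2 ^ size p <= 2 ^ (b * 2 ^ size p).
  by rewrite expnM leq_exp2r // expn_gt0.
have HQg : (2 ^ (b * 2 ^ size p)).*2 <= 2 ^ g.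
  rewrite -mul2n -expnS leq_exp2l // /g.
  have : 2 ^ size p <= 2 ^ (size p + 2 * f).+1 by rewrite leq_exp2l //; lia.
  have : 0 < 2 ^ size p by rewrite expn_gt0.
  nia.
have H2 : 2 ^ g * 2 ^ g <= 2 ^ (b * 2 ^ size p) * (size c').+1.
  by apply: (leq_trans (leq_trans Hc Hs)); rewrite leq_mul2r HQ orbT.
have Hpos : 0 < 2 ^ (b * 2 ^ size p) by rewrite expn_gt0.
move: H2 HQg Hpos; set P := 2 ^ g; set Q := 2 ^ (b * 2 ^ size p).
rewrite -!muln2; nia.
Qed.

End Greedy.

Definition ramsey_step (b N : nat) := 2 ^ (b.+1 * 2 ^ (2 * N.+1)).

Lemma ordered_ramsey b N r : #|C| <= 2 ^ b ->
  forall (col : seq T -> C) (s : seq T), iter r (ramsey_step b) N <= size s ->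
  exists h, [/\ subseq h s, size h = N &
    exists c0, forall t, subseq t h -> size t = r -> col t = c0].
Proof.
move=> HC; elim: r => [|r IH] col s /= Hs.
  exists (take N s); split; [exact: take_subseq | by rewrite size_takel |].
  by exists (col [::]) => t _ /size0nil ->.
set M := iter r (ramsey_step b) N in IH Hs.
have Hsize : size (greedy col M.+1 [::] s) = M.+1.
  by apply: size_greedy HC _; rewrite add0n.
have Hsub := greedy_subseq col M.+1 [::] s.
have Hend := @greedy_end_homogeneous col M.+1 [::] s.
move: (greedy _ _ _ _) Hsize Hsub Hend; case/lastP => [|e z] //.
rewrite size_rcons => -[He] Hsub Hend.
have [h [Hh Hhsize [c0 Hc0]]] := IH (fun u => col (rcons u z)) e (eq_leq (esym He)).
exists h; split => //.
  exact: subseq_trans Hh (subseq_trans (subseq_rcons e z) Hsub).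
exists c0 => t; case/lastP: t => [|u x] // Hux; rewrite size_rcons => -[Hu].
have [e1 [e2 [Ee Hue]]] := rcons_subseqP (subseq_trans Hux Hh).
rewrite (Hend u e1 x e2 z [::]) //; last by rewrite -cats1 Ee -catA.
exact: Hc0 (subseq_trans (subseq_rcons u x) Hux) Hu.
Qed.

End OrderedRamsey.

Fixpoint tower (j : nat) : nat := if j is j'.+1 then 2 ^ tower j' else 1.

Lemma ltn_tower j : j < tower j.
Proof. by elim: j => //= j IH; apply: leq_ltn_trans IH (ltn_expl _ (ltnSn 1)). Qed.

Lemma leq_iter_ramsey_step b N r : N <= iter r (ramsey_step b) N.
Proof.
elim: r => //= r IH; apply: (leq_trans IH); set M := iter r _ N.
apply: ltnW (leq_trans (ltn_expl M (ltnSn 1)) _); rewrite leq_exp2l //.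
have := ltn_expl (2 * M.+1) (ltnSn 1); nia.
Qed.

Lemma ramsey_step_le_tower3 b N : b + 3 <= N -> 4 <= N ->
  ramsey_step b N <= 2 ^ 2 ^ 2 ^ N.
Proof.
move=> HbN HN; rewrite /ramsey_step leq_exp2l //.
have H3N : 3 * N <= 2 ^ N.
  elim: N HN {HbN} => // N IH; rewrite leq_eqVlt => /orP[/eqP<- //|HN].
  by rewrite expnS; have := IH HN; lia.
apply: leq_trans (leq_mul (ltnW (ltn_expl b.+1 (ltnSn 1))) (leqnn _)) _.
by rewrite -expnD leq_exp2l //; lia.
Qed.

Lemma iter_ramsey_step_le_tower b N h r : b + 3 <= N -> 4 <= N -> N <= tower h ->
  iter r (ramsey_step b) N <= tower (h + 3 * r).
Proof.
move=> HbN HN HNh; elim: r => [|r IH] /=; first by rewrite addn0.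
have HM := leq_iter_ramsey_step b N r.
apply: leq_trans (ramsey_step_le_tower3 _ _) _; try lia.
have -> : h + 3 * r.+1 = (h + 3 * r).+3 by lia.
by rewrite /= !leq_exp2l.
Qed.

Lemma ramsey_base_le_tower n : (32 * n).+1 * n.+1 + 4 * n + 8 <= tower (n + 4).
Proof.
have Hn : n < 2 ^ n := ltn_expl _ (ltnSn 1).
have H2 : 2 ^ (2 * n + 7) <= tower (n + 4).
  rewrite addn4 /= leq_exp2l //.
  have H3 : 2 ^ n.+3 <= tower n.+3 by rewrite /= leq_exp2l //; exact: ltn_tower.
  by apply: leq_trans H3; rewrite !expnS; lia.
apply: leq_trans H2.
have -> : 2 ^ (2 * n + 7) = 128 * (2 ^ n * 2 ^ n).
  by rewrite -expnD -[128]/(2 ^ 7) -expnD; congr (2 ^ _); lia.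
nia.
Qed.

Definition insert_at (dd : nat -> nat) (j r x : nat) : nat :=
  if x < j then dd x else if x == j then r else dd x.-1.

Lemma insert_at_bump dd j r k : insert_at dd j r (bump j k) = dd k.
Proof.
rewrite /insert_at /bump; case: (leqP j k) => H /=.
  by rewrite add1n ltnNge (leqW H) /= gtn_eqF.
by rewrite add0n H.
Qed.

Lemma insert_at_pos dd j r : insert_at dd j r j = r.
Proof. by rewrite /insert_at ltnn eqxx. Qed.

Section InsertAt.
Variables (dd : nat -> nat) (j r : nat).
Hypotheses (dd_incr : {homo dd : a b / a < b})
  (prev_lt_r : 0 < j -> dd j.-1 < r) (r_lt_next : r < dd j).

Let dd_mono : {homo dd : a b / a <= b}.
Proof. by move=> a b; rewrite leq_eqVlt => /orP[/eqP-> //|/dd_incr/ltnW]. Qed.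

Lemma insert_at_incr : {homo insert_at dd j r : a b / a < b}.
Proof.
move=> a b ab; rewrite /insert_at.
case: (ltnP a j) => aj; case: (ltnP b j) => bj.
- exact: dd_incr.
- case: eqP => [bj'|bj']; last by apply: dd_incr; lia.
  by apply: leq_ltn_trans (prev_lt_r _); [apply: dd_mono|]; lia.
- lia.
- rewrite (gtn_eqF (leq_ltn_trans aj ab)).
  case: eqP => [aj'|aj']; last by apply: dd_incr; lia.
  by apply: leq_trans r_lt_next _; apply: dd_mono; lia.
Qed.

Lemma insert_at_le x y : x <= y -> insert_at dd j r x <= dd y.
Proof.
move=> xy; apply: leq_trans (dd_mono xy); rewrite /insert_at.
case: ltnP => // jx; case: eqP => [->|xj]; first exact: ltnW.
apply/ltnW/dd_incr; case: x jx xj {xy} => [|x] //.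
by rewrite leqn0 => /eqP ->.
Qed.

End InsertAt.

Lemma sorted_subset_subseq (T : eqType) (leT : rel T) (s1 s2 : seq T) :
  transitive leT -> irreflexive leT -> sorted leT s1 -> sorted leT s2 ->
  {subset s1 <= s2} -> subseq s1 s2.
Proof.
move=> leT_tr leT_irr s1_sorted s2_sorted s12.
suff -> : s1 = [seq x <- s2 | x \in s1] by apply: filter_subseq.
apply: (irr_sorted_eq leT_tr leT_irr) => //; first exact: sorted_filter.
by move=> x; rewrite mem_filter; case: (boolP (x \in s1)) => // /s12 ->.
Qed.

Lemma sorted_ramsey d (X : finOrderType d) (C : finType) b N r (col : seq X -> C) :
  #|C| <= 2 ^ b -> iter r (ramsey_step b) N <= #|X| ->
  exists h, [/\ sorted <%O h, size h = N &
    exists c0, forall t, subseq t h -> size t = r -> col t = c0].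
Proof.
move=> HC HX; have := @ordered_ramsey _ C b N r HC col (sort <=%O (enum X)).
rewrite size_sort -cardE => /(_ HX) [h [hs hN hc]].
exists h; split => //; apply: subseq_lt_sorted hs _.
by rewrite sort_lt_sorted enum_uniq.
Qed.

Lemma foldr_sel_mem (T : eqType) (op : T -> T -> T) (a : T) (l : seq T) :
  (forall x y, op x y \in [:: x; y]) -> foldr op a l \in a :: l.
Proof.
move=> op_sel; elim: l => [|z l IH] /=; first exact: mem_head.
have := op_sel z (foldr op a l); rewrite !inE => /orP[->|/eqP->]; first by rewrite orbT.
by move: IH; rewrite inE => /orP[->|->]; rewrite ?orbT.
Qed.

Section TupleExtrema.
Variables (d : Order.disp_t) (X : finOrderType d) (n : nat).
Hypothesis n_gt0 : 0 < n.

Lemma foldr_head_mem (op : X -> X -> X) (D : n.-tuple X) y :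
  (forall x z, op x z \in [:: x; z]) -> foldr op (head y D) D \in (D : seq X).
Proof.
case: D => [[|a l] /= sD] op_sel; first by move: sD n_gt0 => /eqP <-.
by have := foldr_sel_mem a (a :: l) op_sel; rewrite /= inE => /orP[/eqP->|//]; rewrite mem_head.
Qed.

Lemma tmin_mem (D : n.-tuple X) y : tmin D y \in (D : seq X).
Proof. by apply: foldr_head_mem => x z; rewrite minEle !inE; case: ifP; rewrite eqxx ?orbT. Qed.

Lemma tmax_mem (D : n.-tuple X) y : tmax D y \in (D : seq X).
Proof. by apply: foldr_head_mem => x z; rewrite maxEle !inE; case: ifP; rewrite eqxx ?orbT. Qed.

Lemma interior_gt (D : n.-tuple X) q x :
  (forall a, a \in (D : seq X) -> (q < a)%O) -> interior D x -> (q < x)%O.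
Proof. by move=> Dq /andP[minx _]; apply: lt_le_trans (Dq _ (tmin_mem D x)) minx. Qed.

Lemma interior_le (D : n.-tuple X) q x :
  (forall a, a \in (D : seq X) -> (a <= q)%O) -> interior D x -> (x <= q)%O.
Proof. by move=> Dq /andP[_ xmax]; apply: le_trans xmax (Dq _ (tmax_mem D x)). Qed.

End TupleExtrema.

Local Open Scope ring_scope.

Definition quantize (R : realType) (K : nat) (v : R) : 'I_K.+1 := inord (Num.truncn (K%:R * v)).

Lemma quantize_close (R : realType) (K : nat) (v w : R) : (0 < K)%N ->
  0 <= v <= 1 -> 0 <= w <= 1 -> quantize K v = quantize K w -> v - w < K%:R^-1.
Proof.
move=> K_gt0 /andP[v0 v1] /andP[w0 w1].
have K0 : (0 : R) < K%:R by rewrite ltr0n.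
have trunc_le : forall u : R, 0 <= u <= 1 -> (Num.truncn (K%:R * u) < K.+1)%N.
  move=> u /andP[u0 u1]; rewrite truncn_lt_nat ?mulr_ge0 //.
  apply: le_lt_trans (_ : K%:R * 1 < _); first by rewrite ler_wpM2l // ltW.
  by rewrite mulr1 ltr_nat.
move/(congr1 val); rewrite /= !inordK ?trunc_le ?v0 ?v1 ?w0 ?w1 // => E.
have := truncn_itv (mulr_ge0 (ltW K0) v0); have := truncn_itv (mulr_ge0 (ltW K0) w0).
rewrite E => /andP[Hw1 Hw2] /andP[Hv1 Hv2].
rewrite -(ltr_pM2l K0) mulrBr mulfV ?gt_eqF //.
by move: Hw1 Hw2 Hv1 Hv2; rewrite -!natr1; lra.
Qed.

Section Cdf.
Variables (R : realType) (d : Order.disp_t) (X : finOrderType d) (n : nat).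
Variable A : n.-tuple X -> {ffun X -> R}.
Hypothesis A_rand : is_rand_alg A.

Definition cdf (D : n.-tuple X) (q : X) : R := \sum_(x | (x <= q)%O) A D x.

Lemma ler_sum_subpred (D : n.-tuple X) (P Q : pred X) : (forall x, P x -> Q x) ->
  \sum_(x | P x) A D x <= \sum_(x | Q x) A D x.
Proof.
move=> PQ; rewrite [leRHS](bigID P) /=.
have -> : \sum_(x | Q x && P x) A D x = \sum_(x | P x) A D x.
  by apply: eq_bigl => x; case: (boolP (P x)) => [/PQ ->|]; rewrite ?andbF.
by rewrite lerDl; apply: sumr_ge0 => x _; apply: (A_rand D).1.
Qed.

Lemma sum_predC_prob (D : n.-tuple X) (P : pred X) :
  \sum_(x | ~~ P x) A D x = 1 - \sum_(x | P x) A D x.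
Proof. by have := (A_rand D).2; rewrite (bigID P) /= => <-; rewrite addrC addrK. Qed.

Lemma cdf_ge0 D q : 0 <= cdf D q.
Proof. by apply: sumr_ge0 => x _; apply: (A_rand D).1. Qed.

Lemma cdf_le1 D q : cdf D q <= 1.
Proof. by rewrite -(A_rand D).2; apply: ler_sum_subpred. Qed.

Lemma cdfB D q1 q2 : (q1 <= q2)%O ->
  cdf D q2 - cdf D q1 = \sum_(x in [set x | (q1 < x)%O && (x <= q2)%O]) A D x.
Proof.
move=> q12; rewrite /cdf (bigID (fun x => (x <= q1)%O)) /=.
have -> : \sum_(x | (x <= q2)%O && (x <= q1)%O) A D x = \sum_(x | (x <= q1)%O) A D x.
  apply: eq_bigl => x; apply/andP/idP => [[]//|xq1]; split => //.
  exact: le_trans xq1 q12.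
by rewrite addrC addrK; apply: eq_bigl => x; rewrite inE -ltNge andbC.
Qed.

Lemma cdf_quantize_close K D1 D2 q1 q2 : (0 < K)%N ->
  quantize K (cdf D1 q1) = quantize K (cdf D2 q2) -> cdf D1 q1 - cdf D2 q2 < K%:R^-1.
Proof. by move=> K_gt0 E; apply: quantize_close E; rewrite ?cdf_ge0 ?cdf_le1. Qed.

Section InteriorSolver.
Variable p : R.
Hypotheses (n_gt0 : (0 < n)%N) (A_int : solves_interior p A).

Lemma cdf_below_min (D : n.-tuple X) q :
  (forall a, a \in (D : seq X) -> (q < a)%O) -> cdf D q <= 1 - p.
Proof.
move=> Dq; apply: le_trans (_ : \sum_(x | ~~ interior D x) A D x <= _).
  by apply: ler_sum_subpred => x xq; apply/negP => /(interior_gt n_gt0 Dq); rewrite ltNge xq.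
by rewrite sum_predC_prob lerD2l lerN2 A_int.
Qed.

Lemma cdf_above_max (D : n.-tuple X) q :
  (forall a, a \in (D : seq X) -> (a <= q)%O) -> p <= cdf D q.
Proof.
move=> Dq; apply: le_trans (A_int D) _.
by apply: ler_sum_subpred => x /(interior_le n_gt0 Dq).
Qed.

End InteriorSolver.
End Cdf.

Lemma exists_large_increment (R : realFieldType) (f : nat -> R) (n : nat) (a : R) :
  (0 < n)%N -> f 0%N + a <= f n -> exists2 i, (i < n)%N & a / n%:R <= f i.+1 - f i.
Proof.
move=> n_gt0 fa.
case: (boolP [exists i : 'I_n, a / n%:R <= f i.+1 - f i]) => [/existsP[i Hi]|].
  by exists i.
rewrite negb_exists => /forallP small; exfalso.
have : \sum_(0 <= k < n) (f k.+1 - f k) < \sum_(0 <= k < n) (a / n%:R).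
  by apply: ltr_sum_nat => // k /andP[_ kn]; have := small (Ordinal kn); rewrite -ltNge.
rewrite telescope_sumr // sumr_const_nat subn0 -[_ *+ n]mulr_natr.
by rewrite divfK ?pnatr_eq0 -?lt0n //; lra.
Qed.

Lemma expR_le2 (R : realType) (eps : R) : eps <= 1 / 2 -> expR eps <= 2.
Proof.
move=> eps_le; have E0 := expR_gt0 eps.
have := expR_ge1Dx (- eps); rewrite expRN => h1.
have h2 : (expR eps)^-1 * expR eps = 1 by rewrite mulVf // gt_eqF.
have h3 : 0 <= (expR eps)^-1 * expR eps - (1 - eps) * expR eps.
  by rewrite -mulrBl; apply: mulr_ge0; [rewrite subr_ge0 | exact: ltW].
nra.
Qed.

Lemma neighbors_mktuple d (X : finOrderType d) n (f g : 'I_n -> X) i :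
  f i != g i -> (forall k, k != i -> f k = g k) ->
  neighbors [tuple f k | k < n] [tuple g k | k < n].
Proof.
move=> fgi fg; rewrite /neighbors (_ : [set _ | _] = [set i]) ?cards1 //.
apply/setP => k; rewrite !inE !tnth_mktuple.
by case: (eqVneq k i) => [->|/fg ->]; rewrite ?fgi ?eqxx.
Qed.

(* The indices dd 0 < ... < dd (n-1), with r inserted at position j, pick an
   increasing (n+1)-subsequence of hh; c0 is the common Ramsey colour. *)
Lemma homogeneous_cdf_grid (R : realType) d (X : finOrderType d) n
    (A : n.-tuple X -> {ffun X -> R}) (K N : nat) :
  (iter n.+1 (ramsey_step (K.+1 * n.+1)) N <= #|X|)%N ->
  exists hh : nat -> X, (forall k l, (k < l < N)%N -> (hh k < hh l)%O) /\
  exists c0 : 'I_n.+1 -> 'I_K.+1, forall (dd : nat -> nat) (j r : nat),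
    {homo dd : a b / (a < b)%N} -> ((0 < j)%N -> (dd j.-1 < r)%N) -> (r < dd j)%N ->
    (j <= n)%N -> (dd n < N)%N ->
    quantize K (cdf A [tuple hh (dd k) | k < n] (hh r)) = c0 (inord j).
Proof.
move=> HX.
have /card_gt0P[x0 _] : (0 < #|X|)%N by apply: leq_trans HX; rewrite iterS expn_gt0.
pose row_deleted (t : seq X) (j : 'I_n.+1) := [tuple nth x0 t (bump j k) | k < n].
pose col (t : seq X) : {ffun 'I_n.+1 -> 'I_K.+1} :=
  [ffun j => quantize K (cdf A (row_deleted t j) (nth x0 t j))].
have HC : (#|{ffun 'I_n.+1 -> 'I_K.+1}| <= 2 ^ (K.+1 * n.+1))%N.
  by rewrite card_ffun !card_ord expnM leq_exp2r // ltnW // ltn_expl.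
have [h [h_sorted h_size [c0 Hc0]]] := sorted_ramsey col HC HX.
have hh_lt k l : (k < l)%N -> (l < N)%N -> (nth x0 h k < nth x0 h l)%O.
  by move=> kl lN; rewrite lt_sorted_ltn_nth // inE h_size ?(ltn_trans kl).
exists (nth x0 h); split; first by move=> k l /andP[]; apply: hh_lt.
exists c0 => dd j r dd_incr prev_lt_r r_lt_next jn ddn.
set g := insert_at dd j r.
have g_incr := insert_at_incr dd_incr prev_lt_r r_lt_next.
have g_lt x : (x <= n)%N -> (g x < N)%N.
  by move=> xn; apply: leq_ltn_trans (insert_at_le dd_incr r_lt_next xn) ddn.
set t := mkseq (fun x => nth x0 h (g x)) n.+1.
have t_sub : subseq t h.
  apply: (sorted_subset_subseq lt_trans ltxx) h_sorted _.
    apply: (homo_sorted_in (P := [pred x | (x <= n)%N]) (e := ltn)); last exact: iota_ltn_sorted.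
      by move=> x y xn yn xy; apply: hh_lt (g_incr _ _ xy) (g_lt _ yn).
    by apply/allP => x; rewrite mem_iota.
  move=> y /mapP[x]; rewrite mem_iota => /andP[_ xn] ->.
  by apply: mem_nth; rewrite h_size g_lt.
have := congr1 (fun c : {ffun _ -> _} => c (inord j)) (Hc0 t t_sub (size_mkseq _ _)).
rewrite /= /col ffunE inordK ?ltnS // nth_mkseq ?ltnS // /g insert_at_pos.
suff -> : row_deleted t (inord j) = [tuple nth x0 h (dd k) | k < n] by [].
apply: eq_mktuple => k; rewrite inordK ?ltnS // nth_mkseq /g ?insert_at_bump //.
by rewrite /bump; case: (j <= k)%N; rewrite ?add1n ?add0n ltnS // ltnW.
Qed.

Section HomogeneousGrid.
Variables (R : realType) (d : Order.disp_t) (X : finOrderType d) (n N : nat).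
Variable A : n.-tuple X -> {ffun X -> R}.
Hypotheses (n_gt0 : (0 < n)%N) (grid_big : (4 * n + 5 <= N)%N)
  (A_rand : is_rand_alg A) (A_int : solves_interior (3 / 4) A).
Variable hh : nat -> X.
Hypothesis hh_lt : forall k l, (k < l < N)%N -> (hh k < hh l)%O.

Let D := [tuple hh (4 * k + 4)%N | k < n].

Lemma grid_increment : exists2 i, (i < n)%N &
  1 / 2 / n%:R <= cdf A D (hh (4 * i + 5)%N) - cdf A D (hh (4 * i + 1)%N).
Proof.
have memD a : a \in (D : seq X) -> exists2 k, (k < n)%N & a = hh (4 * k + 4)%N.
  by case/tnthP => k ->; exists k; rewrite ?tnth_mktuple.
pose f i := cdf A D (hh (4 * i + 1)%N).
have f0 : f 0%N <= 1 - 3 / 4.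
  by apply: cdf_below_min => // a /memD[k kn ->]; apply: hh_lt; lia.
have fn : 3 / 4 <= f n.
  by apply: cdf_above_max => // a /memD[k kn ->]; apply/ltW/hh_lt; lia.
have [|i i_lt jump] := exists_large_increment (a := 1 / 2) n_gt0 (_ : f 0%N + _ <= f n).
  lra.
by exists i => //; move: jump; rewrite /f (_ : (4 * i.+1 + 1 = 4 * i + 5)%N) //; lia.
Qed.

Variables (eps delta : R) (c0 : 'I_n.+1 -> 'I_(32 * n).+1).
Hypotheses (eps_le : eps <= 1 / 2) (delta_le : delta <= 1 / (50 * n%:R ^+ 2))
  (A_dp : diff_private eps delta A)
  (hh_cdf : forall (dd : nat -> nat) (j r : nat),
    {homo dd : a b / (a < b)%N} -> ((0 < j)%N -> (dd j.-1 < r)%N) -> (r < dd j)%N ->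
    (j <= n)%N -> (dd n < N)%N ->
    quantize (32 * n) (cdf A [tuple hh (dd k) | k < n] (hh r)) = c0 (inord j)).

Let D' (i : nat) := [tuple hh (4 * k + 4 + 2 * (k == i :> nat))%N | k < n].

Lemma grid_shift_close i : (i < n)%N -> [/\
  cdf A (D' i) (hh (4 * i + 5)%N) - cdf A D (hh (4 * i + 1)%N) < (32 * n)%:R^-1,
  cdf A D (hh (4 * i + 5)%N) - cdf A (D' i) (hh (4 * i + 7)%N) < (32 * n)%:R^-1 &
  cdf A D (hh (4 * i + 7)%N) - cdf A D (hh (4 * i + 5)%N) < (32 * n)%:R^-1].
Proof.
move=> i_lt.
have dd_incr : {homo (fun k => 4 * k + 4)%N : a b / (a < b)%N} by move=> a b /=; lia.
have dd'_incr : {homo (fun k => 4 * k + 4 + 2 * (k == i))%N : a b / (a < b)%N}.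
  by move=> a b ab /=; case: eqP; case: eqP; lia.
have K1 : quantize (32 * n) (cdf A D (hh (4 * i + 1)%N)) = c0 (inord i).
  by apply: (hh_cdf dd_incr) => /=; lia.
have K2 : quantize (32 * n) (cdf A (D' i) (hh (4 * i + 5)%N)) = c0 (inord i).
  by apply: (hh_cdf dd'_incr) => /=; lia.
have K3 : quantize (32 * n) (cdf A D (hh (4 * i + 5)%N)) = c0 (inord i.+1).
  by apply: (hh_cdf dd_incr) => /=; lia.
have K4 : quantize (32 * n) (cdf A (D' i) (hh (4 * i + 7)%N)) = c0 (inord i.+1).
  by apply: (hh_cdf dd'_incr) => /=; lia.
have K5 : quantize (32 * n) (cdf A D (hh (4 * i + 7)%N)) = c0 (inord i.+1).
  by apply: (hh_cdf dd_incr) => /=; lia.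
by split; apply: cdf_quantize_close; rewrite ?muln_gt0 ?n_gt0 ?K1 ?K2 ?K3 ?K4 ?K5.
Qed.

Lemma neighbors_grid_shift i : (i < n)%N -> neighbors (D' i) D.
Proof.
move=> i_lt; apply: (neighbors_mktuple (i := Ordinal i_lt)) => [|k ki] /=.
  by rewrite eqxx gt_eqF //; apply: hh_lt; lia.
by rewrite (negbTE (ki : (k : nat) != i)) addn0.
Qed.

Lemma grid_absurd : False.
Proof.
have [i i_lt jump] := grid_increment.
have [c1 c2 c3] := grid_shift_close i_lt.
have le57 : (hh (4 * i + 5)%N <= hh (4 * i + 7)%N)%O by apply/ltW/hh_lt; lia.
have := A_dp (neighbors_grid_shift i_lt)
  [set x | (hh (4 * i + 5)%N < x)%O && (x <= hh (4 * i + 7)%N)%O].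
rewrite -!cdfB // => dp.
have mass_ge0 : 0 <= cdf A D (hh (4 * i + 7)%N) - cdf A D (hh (4 * i + 5)%N).
  by rewrite cdfB //; apply: sumr_ge0 => x _; apply: (A_rand D).1.
have := ler_wpM2r mass_ge0 (expR_le2 eps_le).
pose y : R := n%:R^-1.
have y0 : 0 < y by rewrite invr_gt0 ltr0n.
have y1 : y <= 1 by rewrite invf_le1 ?ler1n ?ltr0n.
have n0 : n%:R != 0 :> R by rewrite pnatr_eq0 -lt0n.
have K_y : (32 * n)%:R^-1 = y / 32 :> R by rewrite natrM invfM mulrC.
have jump_y : 1 / 2 / n%:R = y / 2 :> R by rewrite /y; field.
have delta_y : 1 / (50 * n%:R ^+ 2) = y ^+ 2 / 50 :> R by rewrite /y; field.
have y2 : y ^+ 2 <= y by rewrite expr2 ger_pMl.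
have := delta_le; rewrite K_y in c1 c2 c3; rewrite jump_y delta_y in jump *.
lra.
Qed.

End HomogeneousGrid.

Lemma logstar_fuel_le_tower (R : realType) j k (x : R) :
  x <= (tower j)%:R -> (logstar_fuel k x <= j)%N.
Proof.
elim: j k x => [|j IH] [|k] x //= Hx; first by rewrite Hx.
case: ifP => // /negbT; rewrite -ltNge => Hx1; apply: IH.
have x0 : 0 < x by apply: lt_trans Hx1.
have l2 : 0 < ln (2 : R) by apply: ln_gt0; rewrite ltr1n.
rewrite ler_pdivrMr // mulr_natl -lnXn ?ltr0n // ler_ln ?posrE ?exprn_gt0 ?ltr0n //.
by rewrite -natrX.
Qed.

Lemma interior_point_card_lt (R : realType) d (X : finOrderType d) n N
    (A : n.-tuple X -> {ffun X -> R}) (eps delta : R) :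
  (0 < n)%N -> (4 * n + 5 <= N)%N -> eps <= 1 / 2 -> delta <= 1 / (50 * n%:R ^+ 2) ->
  is_rand_alg A -> diff_private eps delta A -> solves_interior (3 / 4) A ->
  (#|X| < iter n.+1 (ramsey_step ((32 * n).+1 * n.+1)) N)%N.
Proof.
move=> n_gt0 grid_big eps_le delta_le A_rand A_dp A_int.
rewrite ltnNge; apply/negP => /(homogeneous_cdf_grid A) [hh [hh_lt [c0 hh_cdf]]].
exact: (grid_absurd n_gt0 grid_big A_rand A_int hh_lt eps_le delta_le A_dp hh_cdf).
Qed.

Unset Implicit Arguments.

Theorem theorem3p2 (R : realType) (eps : R) (delta : nat -> R)
  (heps : 0 < eps < 1 / 4)
  (hdelta : forall n : nat, (0 < n)%N -> delta n <= 1 / (50 * (n%:R) ^+ 2)) :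
  exists c : R, 0 < c /\
    forall (n : nat), (0 < n)%N ->
    forall (d : Order.disp_t) (X : finOrderType d)
           (A : n.-tuple X -> {ffun X -> R}),
      is_rand_alg A ->
      diff_private eps (delta n) A ->
      solves_interior (3 / 4) A ->
      c * ((logstar R #|X|)%:R) <= n%:R.
Proof.
exists (1 / 11); split => [|n n_gt0 d X A A_rand A_dp A_int]; first by rewrite divr_gt0.
have eps_le : eps <= 1 / 2 by case/andP: heps => _; lra.
pose b := ((32 * n).+1 * n.+1)%N.
have grid_big : (4 * n + 5 <= b + 4 * n + 8)%N by lia.
have X_lt := interior_point_card_lt n_gt0 grid_big eps_le (hdelta n n_gt0) A_rand A_dp A_int.
have X_le : (#|X| <= tower (n + 4 + 3 * n.+1))%N.
  apply/ltnW/(leq_trans X_lt)/iter_ramsey_step_le_tower; try lia.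
  exact: ramsey_base_le_tower.
have logstar_le : (logstar R #|X| <= 11 * n)%N.
  apply: leq_trans (@logstar_fuel_le_tower R (n + 4 + 3 * n.+1) _ _ _) _.
    by rewrite ler_nat.
  lia.
have : (logstar R #|X|)%:R <= (11 * n)%:R :> R by rewrite ler_nat.
rewrite natrM; lra.
Qed.
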